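(* (1) For any group $(G,\cdot)$, setting $a\triangleright b=a^{-1}ba$ makes $(G,\cdot,\triangleright)$ a post-group. (2) For any two-step nilpotent group $(G,\cdot)$ and any integer $n\neq 0$, setting $a\triangleright b=a^{-n}ba^{n}$ makes $(G,\cdot,\triangleright)$ a post-group.
   Context: A post-group is a triple $(G,\cdot,\triangleright)$ with $(G,\cdot)$ a group and $\triangleright$ a binary operation such that for each $a$ the map $b\mapsto a\triangleright b$ is an automorphism of $(G,\cdot)$ and $a\triangleright(b\triangleright c)=(a\cdot(a\triangleright b))\triangleright c$ for all $a,b,c\in G$. A two-step nilpotent group is a group of nilpotency class at most $2$, i.e. all commutators $[a,b]=a^{-1}b^{-1}ab$ are central. *)

From Stdlib Require Import ZArith.

Section GroupDefs.
Variable G : Type.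
Variable mul : G -> G -> G.
Variable e : G.
Variable inv : G -> G.

Definition is_group : Prop :=
  (forall a b c, mul a (mul b c) = mul (mul a b) c) /\
  (forall a, mul e a = a) /\ (forall a, mul a e = a) /\
  (forall a, mul (inv a) a = e) /\ (forall a, mul a (inv a) = e).

Definition is_automorphism (f : G -> G) : Prop :=
  (forall x y, f (mul x y) = mul (f x) (f y)) /\
  (exists g : G -> G, (forall x, g (f x) = x) /\ (forall y, f (g y) = y)).

Definition is_post_group (tri : G -> G -> G) : Prop :=
  is_group /\
  (forall a, is_automorphism (tri a)) /\
  (forall a b c, tri a (tri b c) = tri (mul a (tri a b)) c).

Fixpoint npow (x : G) (n : nat) : G :=
  match n with
  | O => e
  | S k => mul (npow x k) x
  end.

Definition zpow (x : G) (n : Z) : G :=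
  match n with
  | Z0 => e
  | Zpos p => npow x (Pos.to_nat p)
  | Zneg p => npow (inv x) (Pos.to_nat p)
  end.

Definition commutator (a b : G) : G := mul (mul (mul (inv a) (inv b)) a) b.

Definition two_step_nilpotent : Prop :=
  forall a b c, mul (commutator a b) c = mul c (commutator a b).

End GroupDefs.

Arguments is_group {G}.
Arguments is_automorphism {G}.
Arguments is_post_group {G}.
Arguments npow {G}.
Arguments zpow {G}.
Arguments commutator {G}.
Arguments two_step_nilpotent {G}.

(* Both operations are conjugations a ▷ b = P(a)⁻¹ b P(a), for P(a) = a and
   P(a) = aⁿ respectively.  Such a ▷ is by automorphisms, and since
   a ▷ (b ▷ c) is conjugation by P(b) P(a), the post-group identity holds as
   soon as P(a (a ▷ b)) agrees with P(b) P(a) up to a central factor.  For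
   P(a) = a they are equal.  In a group of class 2, a ▷ b ≡ b modulo the
   centre, and (xy)ⁿ ≡ xⁿyⁿ ≡ yⁿxⁿ, which gives the congruence for P(a) = aⁿ. *)

From Stdlib Require Import ZArith Setoid Morphisms.

Section Group.
Variable G : Type.
Variable mul : G -> G -> G.
Variable e : G.
Variable inv : G -> G.
Hypothesis group_G : is_group mul e inv.

Lemma mulgA x y z : mul x (mul y z) = mul (mul x y) z.
Proof. apply group_G. Qed.

Lemma mul1g x : mul e x = x.
Proof. apply group_G. Qed.

Lemma mulg1 x : mul x e = x.
Proof. apply group_G. Qed.

Lemma mulVg x : mul (inv x) x = e.
Proof. apply group_G. Qed.

Lemma mulgV x : mul x (inv x) = e.
Proof. apply group_G. Qed.

Lemma mulKg x y : mul (inv x) (mul x y) = y.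
Proof. rewrite mulgA, mulVg, mul1g. reflexivity. Qed.

Lemma mulKVg x y : mul x (mul (inv x) y) = y.
Proof. rewrite mulgA, mulgV, mul1g. reflexivity. Qed.

Lemma invg_unique x y : mul x y = e -> inv x = y.
Proof. intro xy1. rewrite <- (mulKg x y), xy1, mulg1. reflexivity. Qed.

Lemma invgK x : inv (inv x) = x.
Proof. apply invg_unique, mulVg. Qed.

Lemma invMg x y : inv (mul x y) = mul (inv y) (inv x).
Proof. apply invg_unique. rewrite <- !mulgA, mulKVg, mulgV. reflexivity. Qed.

Lemma invg1 : inv e = e.
Proof. apply invg_unique, mul1g. Qed.

Ltac group_simpl :=
  repeat progress rewrite ?invMg, ?invgK, ?invg1, ?mul1g, ?mulg1,
                          ?mulKg, ?mulKVg, ?mulVg, ?mulgV, <- ?mulgA.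

Definition conjg (x b : G) : G := mul (mul (inv x) b) x.

Lemma conjgM x y c : conjg (mul x y) c = conjg y (conjg x c).
Proof. unfold conjg. group_simpl. reflexivity. Qed.

Lemma conjg_automorphism x : is_automorphism mul (conjg x).
Proof.
  unfold conjg. split.
  - intros b c. group_simpl. reflexivity.
  - exists (fun b => mul (mul x b) (inv x)). split; intro b; group_simpl; reflexivity.
Qed.

Definition central (z : G) : Prop := forall c, mul z c = mul c z.

Lemma central1 : central e.
Proof. intro c. rewrite mul1g, mulg1. reflexivity. Qed.

Lemma centralV z : central z -> central (inv z).
Proof.
  intros Zz c. transitivity (mul (inv z) (mul (mul c z) (inv z))).
  - group_simpl. reflexivity.
  - rewrite <- Zz. group_simpl. reflexivity.
Qed.

Lemma centralM z1 z2 : central z1 -> central z2 -> central (mul z1 z2).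
Proof. intros Z1 Z2 c. rewrite <- mulgA, Z2, mulgA, Z1, mulgA. reflexivity. Qed.

Definition eq_mod_center (x y : G) : Prop := exists z, central z /\ y = mul x z.

#[local] Instance eq_mod_center_equiv : Equivalence eq_mod_center.
Proof.
  split.
  - intro x. exists e. split; [apply central1 | rewrite mulg1; reflexivity].
  - intros x y [z [Zz ->]]. exists (inv z).
    split; [apply centralV, Zz | group_simpl; reflexivity].
  - intros x y w [z1 [Z1 ->]] [z2 [Z2 ->]]. exists (mul z1 z2).
    split; [apply centralM; assumption | group_simpl; reflexivity].
Qed.

#[local] Instance mul_mod_center_proper :
  Proper (eq_mod_center ==> eq_mod_center ==> eq_mod_center) mul.
Proof.
  intros x x' [z1 [Z1 ->]] y y' [z2 [Z2 ->]]. exists (mul z1 z2).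
  split; [apply centralM; assumption|].
  rewrite <- !mulgA, (mulgA z1 y z2), (Z1 y), <- mulgA. reflexivity.
Qed.

Lemma eq_mod_center_conjg x y c : eq_mod_center x y -> conjg x c = conjg y c.
Proof.
  intros [z [Zz ->]]. rewrite conjgM. set (w := conjg x c). unfold conjg.
  rewrite <- mulgA, <- (Zz w), mulKg. reflexivity.
Qed.

Lemma is_post_group_conjg (P : G -> G) :
  (forall a b, eq_mod_center (mul (P b) (P a)) (P (mul a (conjg (P a) b)))) ->
  is_post_group mul e inv (fun a b => conjg (P a) b).
Proof.
  intros P_mod_center. split; [exact group_G | split].
  - intro a. apply conjg_automorphism.
  - intros a b c. rewrite <- conjgM. apply eq_mod_center_conjg, P_mod_center.
Qed.

Lemma is_post_group_conjg_self : is_post_group mul e inv conjg.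
Proof.
  apply (is_post_group_conjg (fun a => a)). intros a b.
  unfold conjg. rewrite mulgA, mulKVg. reflexivity.
Qed.

Lemma is_post_group_ext (tri tri' : G -> G -> G) :
  (forall a b, tri a b = tri' a b) ->
  is_post_group mul e inv tri -> is_post_group mul e inv tri'.
Proof.
  intros tri_tri' [_ [tri_auto tri_post]].
  split; [exact group_G | split].
  - intro a. destruct (tri_auto a) as [tri_morph [f [f_tri tri_f]]]. split.
    + intros x y. rewrite <- !tri_tri'. apply tri_morph.
    + exists f. split; intro x; rewrite <- tri_tri'; [apply f_tri | apply tri_f].
  - intros a b c. rewrite <- !tri_tri'. apply tri_post.
Qed.

Lemma npow_mulg_comm x m : mul (npow mul e x m) x = mul x (npow mul e x m).
Proof.
  induction m as [|m IHm]; simpl.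
  - rewrite mul1g, mulg1. reflexivity.
  - rewrite IHm at 1. symmetry. apply mulgA.
Qed.

Lemma npowV x m : npow mul e (inv x) m = inv (npow mul e x m).
Proof.
  induction m as [|m IHm]; simpl.
  - rewrite invg1. reflexivity.
  - rewrite invMg, <- IHm, npow_mulg_comm. reflexivity.
Qed.

Lemma zpowN x n : zpow mul e inv x (- n) = inv (zpow mul e inv x n).
Proof.
  destruct n; simpl; rewrite ?npowV, ?invgK, ?invg1; reflexivity.
Qed.

#[local] Instance inv_mod_center_proper : Proper (eq_mod_center ==> eq_mod_center) inv.
Proof.
  intros x y [z [Zz ->]]. exists (inv z).
  split; [apply centralV, Zz | rewrite invMg; apply centralV, Zz].
Qed.

#[local] Instance npow_mod_center_proper :
  Proper (eq_mod_center ==> eq ==> eq_mod_center) (npow mul e).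
Proof.
  intros x y xy m _ <-. induction m as [|m IHm]; simpl.
  - reflexivity.
  - rewrite IHm, xy. reflexivity.
Qed.

#[local] Instance zpow_mod_center_proper :
  Proper (eq_mod_center ==> eq ==> eq_mod_center) (zpow mul e inv).
Proof.
  intros x y xy n _ <-. destruct n; simpl; rewrite ?xy; reflexivity.
Qed.

Section TwoStepNilpotent.
Hypothesis class2_G : two_step_nilpotent mul inv.

Lemma mulC_mod_center x y : eq_mod_center (mul x y) (mul y x).
Proof.
  exists (commutator mul inv y x). split; [intro c; apply class2_G|].
  unfold commutator. group_simpl. reflexivity.
Qed.

Lemma conjg_mod_center x b : eq_mod_center (conjg x b) b.
Proof.
  symmetry. exists (commutator mul inv b x). split; [intro c; apply class2_G|].
  unfold conjg, commutator. group_simpl. reflexivity.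
Qed.

Lemma npowM_mod_center x y m :
  eq_mod_center (npow mul e (mul x y) m) (mul (npow mul e x m) (npow mul e y m)).
Proof.
  induction m as [|m IHm]; simpl.
  - rewrite mul1g. reflexivity.
  - rewrite IHm, <- !mulgA, (mulgA (npow mul e y m) x y),
      (mulC_mod_center (npow mul e y m) x).
    group_simpl. reflexivity.
Qed.

Lemma zpowM_mod_center x y n :
  eq_mod_center (zpow mul e inv (mul x y) n)
                (mul (zpow mul e inv x n) (zpow mul e inv y n)).
Proof.
  destruct n; simpl.
  - rewrite mul1g. reflexivity.
  - apply npowM_mod_center.
  - rewrite invMg, npowM_mod_center. apply mulC_mod_center.
Qed.

Lemma is_post_group_conjg_zpow n :
  is_post_group mul e inv (fun a b => conjg (zpow mul e inv a n) b).
Proof.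
  apply is_post_group_conjg. intros a b.
  rewrite conjg_mod_center, zpowM_mod_center. apply mulC_mod_center.
Qed.

End TwoStepNilpotent.
End Group.

Theorem proposition5p3 :
  (forall (G : Type) (mul : G -> G -> G) (e : G) (inv : G -> G),
     is_group mul e inv ->
     is_post_group mul e inv (fun a b => mul (mul (inv a) b) a)) /\
  (forall (G : Type) (mul : G -> G -> G) (e : G) (inv : G -> G) (n : Z),
     is_group mul e inv ->
     two_step_nilpotent mul inv ->
     n <> 0%Z ->
     is_post_group mul e inv
       (fun a b => mul (mul (zpow mul e inv a (- n)%Z) b) (zpow mul e inv a n))).
Proof.
  split.
  - intros G mul e inv group_G. exact (is_post_group_conjg_self G mul e inv group_G).
  - intros G mul e inv n group_G class2_G _.
    refine (is_post_group_ext G mul e inv group_G _ _ _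
              (is_post_group_conjg_zpow G mul e inv group_G class2_G n)).
    intros a b. unfold conjg. rewrite (zpowN G mul e inv group_G). reflexivity.
Qed.
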